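(* Let $q$ be a distribution over prompts $\mathbf{x}$, let $p_{\mathrm{data}}(\cdot\mid\mathbf{x})$ be the target conditional distribution of responses, and let $\{p_{\boldsymbol{\theta}}(\cdot\mid\mathbf{x}) : \boldsymbol{\theta}\in\boldsymbol{\Theta}\}$ be a parametrized family of conditional distributions. Let $\ell(t)=\log(1+\exp(-t))$ be the logistic loss, let $\lambda>0$, and for $\boldsymbol{\theta},\boldsymbol{\theta}_t\in\boldsymbol{\Theta}$ define $$L_{\mathrm{SPIN}}(\boldsymbol{\theta},\boldsymbol{\theta}_t)=\mathbb{E}_{\mathbf{x}\sim q(\cdot),\,\mathbf{y}\sim p_{\mathrm{data}}(\cdot\mid\mathbf{x}),\,\mathbf{y}'\sim p_{\boldsymbol{\theta}_t}(\cdot\mid\mathbf{x})}\Big[\ell\Big(\lambda\log\frac{p_{\boldsymbol{\theta}}(\mathbf{y}\mid\mathbf{x})}{p_{\boldsymbol{\theta}_t}(\mathbf{y}\mid\mathbf{x})}-\lambda\log\frac{p_{\boldsymbol{\theta}}(\mathbf{y}'\mid\mathbf{x})}{p_{\boldsymbol{\theta}_t}(\mathbf{y}'\mid\mathbf{x})}\Big)\Big].$$ Suppose that the conditional distribution (normalized over $\mathbf{y}$ for each $\mathbf{x}$) proportional to $p_{\boldsymbol{\theta}_t}(\mathbf{y}\mid\mathbf{x})\big(p_{\mathrm{data}}(\mathbf{y}\mid\mathbf{x})/p_{\boldsymbol{\theta}_t}(\mathbf{y}\mid\mathbf{x})\big)^{1/\lambda}$ lies in $\{p_{\boldsymbol{\theta}}(\cdot\mid\mathbf{x})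 : \boldsymbol{\theta}\in\boldsymbol{\Theta}\}$, and that $\boldsymbol{\theta}_{t+1}$ is a global minimum of $\boldsymbol{\theta}\mapsto L_{\mathrm{SPIN}}(\boldsymbol{\theta},\boldsymbol{\theta}_t)$. Then $$p_{\boldsymbol{\theta}_{t+1}}(\mathbf{y}\mid\mathbf{x})\propto p_{\boldsymbol{\theta}_t}(\mathbf{y}\mid\mathbf{x})\big(p_{\mathrm{data}}(\mathbf{y}\mid\mathbf{x})/p_{\boldsymbol{\theta}_t}(\mathbf{y}\mid\mathbf{x})\big)^{1/\lambda},$$ where proportionality is in $\mathbf{y}$ for each fixed $\mathbf{x}$.
   Context: Prompts $\mathbf{x}$ and responses $\mathbf{y}$ are token sequences; $p_{\boldsymbol{\theta}}(\mathbf{y}\mid\mathbf{x})$ is the conditional probability assigned by the model with parameter $\boldsymbol{\theta}$. All conditional probabilities are assumed positive so that log-ratios are well defined. *)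

(* Prompts and responses are token sequences
   over a finite vocabulary V, i.e. elements of [seq V].  Expectations over
   these countable spaces are (nonnegative) extended-real sums [esum]. *)
From HB Require Import structures.
From mathcomp Require Import all_boot all_order all_algebra.
From mathcomp Require Import all_classical all_reals.
From mathcomp Require Import all_analysis.
Set Implicit Arguments. Unset Strict Implicit. Unset Printing Implicit Defensive.
Import Order.TTheory GRing.Theory Num.Theory.
Local Open Scope classical_set_scope.
Local Open Scope ring_scope.

Definition logistic_loss {R : realType} (t : R) : R := ln (1 + expR (- t)).

Definition L_SPIN {R : realType} {V : finType} {Theta : Type}
  (q : seq V -> R) (pdata : seq V -> seq V -> R)
  (p : Theta -> seq V -> seq V -> R) (lam : R) (th tht : Theta) : \bar R :=
  \esum_(x in [set: seq V]) \esum_(y in [set: seq V]) \esum_(y' in [set: seq V])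
    ((q x * pdata x y * p tht x y') *
     logistic_loss (lam * ln (p th x y / p tht x y)
                    - lam * ln (p th x y' / p tht x y')))%:E.

Definition spin_target {R : realType} {V : finType} {Theta : Type}
  (pdata : seq V -> seq V -> R) (p : Theta -> seq V -> seq V -> R)
  (lam : R) (tht : Theta) (x y : seq V) : R :=
  p tht x y * powR (pdata x y / p tht x y) (lam^-1).

Definition spin_norm {R : realType} {V : finType} {Theta : Type}
  (pdata : seq V -> seq V -> R) (p : Theta -> seq V -> seq V -> R)
  (lam : R) (tht : Theta) (x : seq V) : \bar R :=
  \esum_(y in [set: seq V]) (spin_target pdata p lam tht x y)%:E.

From HB Require Import structures.
From mathcomp Require Import all_boot all_order all_algebra.
From mathcomp Require Import all_classical all_reals.
From mathcomp Require Import all_analysis.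
From mathcomp Require Import ring lra.

(* Swapping the two responses shows that 2 L_SPIN(th) is the sum over (x, y, y')
   of q(x) (a l(s) + b l(-s)), where a = pdata(y|x) p_tht(y'|x),
   b = pdata(y'|x) p_tht(y|x), and s = r(y) - r(y') is the margin of the reward
   r = lam ln (p_th / p_tht). By Gibbs' inequality the bracket is minimized
   exactly at s = ln (a / b), which is the margin of the parameter realizing the
   target; so that parameter minimizes every term. As L_SPIN(tht) <= 1 is
   finite, a global minimizer ties with it on every term; where q(x) > 0 it
   therefore has the same margins, i.e. it is proportional to the target. *)

Set Implicit Arguments.
Unset Strict Implicit.
Unset Printing Implicit Defensive.

Import Order.TTheory GRing.Theory Num.Theory.
Local Open Scope classical_set_scope.
Local Open Scope ring_scope.

Lemma ln_ge_1BV (R : realType) (w : R) : 0 < w -> 1 - w^-1 <= ln w.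
Proof.
move=> w0; have -> : w^-1 = expR (- ln w) by rewrite expRN lnK ?posrE.
by have := expR_ge1Dx (- ln w); lra.
Qed.

Lemma ln_gt_1BV (R : realType) (w : R) : 0 < w -> w != 1 -> 1 - w^-1 < ln w.
Proof.
move=> w0 w1; have -> : w^-1 = expR (- ln w) by rewrite expRN lnK ?posrE.
have /expR_gt1Dx : - ln w != 0 by rewrite oppr_eq0 ln_eq0.
lra.
Qed.

Lemma logistic_loss_ge0 (R : realType) (t : R) : 0 <= logistic_loss t.
Proof. by apply: ln_ge0; rewrite lerDl ltW // expR_gt0. Qed.

Definition pair_logistic_loss (R : realType) (a b t : R) : R :=
  a * logistic_loss t + b * logistic_loss (- t).

Lemma pair_logistic_loss_gt (R : realType) (a b t : R) :
  0 < a -> 0 < b -> t != ln (a / b) ->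
  pair_logistic_loss a b (ln (a / b)) < pair_logistic_loss a b t.
Proof.
move=> a0 b0 ts; rewrite /pair_logistic_loss /logistic_loss !opprK.
have ab0 : 0 < a / b by rewrite divr_gt0.
have expNs : expR (- ln (a / b)) = b / a.
  by rewrite expRN lnK ?posrE // invf_div.
have -> : expR (ln (a / b)) = a / b by rewrite lnK ?posrE.
rewrite expNs; set E := expR (- t).
have E0 : 0 < E := expR_gt0 _.
have -> : expR t = E^-1 by rewrite /E expRN invrK.
set u := (1 + E) / (1 + b / a); set v := (1 + E^-1) / (1 + a / b).
have ba1 : 0 < 1 + b / a by rewrite addr_gt0 // divr_gt0.
have ab1 : 0 < 1 + a / b by rewrite addr_gt0.
have E1 : 0 < 1 + E by rewrite addr_gt0.
have E'1 : 0 < 1 + E^-1 by rewrite addr_gt0 // invr_gt0.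
have u0 : 0 < u by rewrite divr_gt0.
have v0 : 0 < v by rewrite divr_gt0.
have -> : ln (1 + E) = ln u + ln (1 + b / a) by rewrite ln_div ?posrE // subrK.
have -> : ln (1 + E^-1) = ln v + ln (1 + a / b).
  by rewrite ln_div ?posrE // subrK.
(* The excess loss is a ln u + b ln v, and the bounds ln w >= 1 - 1/w of its
   two terms cancel exactly. *)
have cancel : a * (1 - u^-1) + b * (1 - v^-1) = 0.
  rewrite /u /v !invf_div; field.
  by rewrite !lt0r_neq0 //= addrC.
have u1 : u != 1.
  apply: contra ts => /eqP /divr1_eq /addrI.
  by rewrite -expNs => /expR_inj /oppr_inj ->.
have hu : a * (1 - u^-1) < a * ln u by rewrite ltr_pM2l // ln_gt_1BV.
have hv : b * (1 - v^-1) <= b * ln v by rewrite ler_wpM2l ?ln_ge_1BV ?ltW.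
lra.
Qed.

Lemma pair_logistic_loss_ge (R : realType) (a b t : R) : 0 < a -> 0 < b ->
  pair_logistic_loss a b (ln (a / b)) <= pair_logistic_loss a b t.
Proof.
move=> a0 b0; have [-> //|ts] := eqVneq t (ln (a / b)).
exact/ltW/pair_logistic_loss_gt.
Qed.

Section esum_lemmas.
Context {R : realType} {T : choiceType}.
Implicit Types (I : set T) (a b : T -> \bar R).
Local Open Scope ereal_scope.

Lemma esum_ge_term I a i : (forall j, I j -> 0 <= a j) -> I i ->
  a i <= \esum_(j in I) a j.
Proof.
move=> a0 Ii; apply: esum_ge; exists [set i]; last by rewrite fsbig_set1.
by split; [exact: finite_set1 | move=> j ->].
Qed.

Lemma esumZl_le I (c : R) a : (0 <= c)%R -> (forall i, I i -> 0 <= a i) ->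
  \esum_(i in I) (c%:E * a i) <= c%:E * \esum_(i in I) a i.
Proof.
move=> c0 a0; apply: ge_ereal_sup => _ [X [finX XI] <-].
rewrite fsbig_finite //= big_seq -ge0_sume_distrr => [|i]; last first.
  by rewrite in_fset_set // inE => /XI /a0.
rewrite -big_seq -fsbig_finite //; apply: lee_wpmul2l; first by rewrite lee_fin.
by apply: ereal_sup_ubound; exists X.
Qed.

Lemma esum_involutive a (e : T -> T) : involutive e ->
  \esum_(i in [set: T]) a (e i) = \esum_(i in [set: T]) a i.
Proof.
move=> eK; symmetry; apply: reindex_esum.
by rewrite setTT_bijective; exact: inv_bij.
Qed.

Lemma le_esum_eq I a b : (forall i, I i -> 0 <= a i <= b i) ->
  \esum_(i in I) b i <= \esum_(i in I) a i -> \esum_(i in I) b i < +oo ->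
  forall i, I i -> b i = a i.
Proof.
move=> ab ba bfin i Ii.
have a0 j : I j -> 0 <= a j by move=> /ab /andP[].
have afin : \esum_(j in I) a j < +oo.
  by apply: le_lt_trans bfin; apply: le_esum => j /ab /andP[].
have afinj j : I j -> a j \is a fin_num.
  move=> Ij; rewrite ge0_fin_numE ?a0 //.
  exact: le_lt_trans (esum_ge_term a0 Ij) afin.
have d0 j : I j -> 0 <= b j - a j.
  by move=> Ij; rewrite sube_ge0 ?afinj //; case/andP: (ab j Ij).
have Sfin : \esum_(j in I) a j \is a fin_num.
  by rewrite ge0_fin_numE // esum_ge0.
have : \esum_(j in I) (b j - a j) <= 0.
  rewrite -(leeD2lE _ _ Sfin) adde0 -esumD //.
  by under eq_esum => j Ij do rewrite addeC subeK ?afinj //.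
move=> /(le_trans (esum_ge_term d0 Ii)); rewrite sube_le0 => ba_i.
by apply/le_anti; rewrite ba_i; case/andP: (ab i Ii).
Qed.

End esum_lemmas.

Lemma esum_esum3 (R : realType) (T1 T2 T3 : choiceType)
    (a : T1 -> T2 -> T3 -> \bar R) : (forall i j k, 0 <= a i j k)%E ->
  \esum_(i in [set: T1]) \esum_(j in [set: T2]) \esum_(k in [set: T3]) a i j k =
  \esum_(u in [set: T1 * (T2 * T3)]) a u.1 u.2.1 u.2.2.
Proof.
move=> a0; under eq_esum do rewrite esum_esum //.
rewrite esum_esum //.
by congr esum; apply/seteqP; split.
Qed.

Section SpinObjective.
Variables (R : realType) (V : finType) (Theta : Type).
Variables (q : seq V -> R) (pdata : seq V -> seq V -> R).
Variables (p : Theta -> seq V -> seq V -> R) (lam : R) (tht : Theta).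
Hypothesis q_ge0 : forall x, 0 <= q x.
Hypothesis pdata_gt0 : forall x y, 0 < pdata x y.
Hypothesis p_gt0 : forall th x y, 0 < p th x y.
Hypothesis lam_gt0 : 0 < lam.

Definition spin_reward th x y := lam * ln (p th x y / p tht x y).

Definition spin_term th x y y' := q x * pdata x y * p tht x y' *
  logistic_loss (spin_reward th x y - spin_reward th x y').

Definition spin_sym_term th x y y' := spin_term th x y y' + spin_term th x y' y.

Definition realizes_spin_target th x z :=
  forall y, p th x y = spin_target pdata p lam tht x y / z.

Lemma spin_term_ge0 th x y y' : 0 <= spin_term th x y y'.
Proof.
by rewrite !mulr_ge0 ?logistic_loss_ge0 ?q_ge0 ?ltW ?pdata_gt0 ?p_gt0.
Qed.

Lemma spin_sym_term_ge0 th x y y' : 0 <= spin_sym_term th x y y'.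
Proof. by rewrite addr_ge0 ?spin_term_ge0. Qed.

Lemma spin_sym_termE th x y y' : spin_sym_term th x y y' =
  q x * pair_logistic_loss (pdata x y * p tht x y') (pdata x y' * p tht x y)
                           (spin_reward th x y - spin_reward th x y').
Proof.
by rewrite /spin_sym_term /spin_term /pair_logistic_loss opprB; ring.
Qed.

Lemma L_SPIN_flat th : L_SPIN q pdata p lam th tht =
  \esum_(u in [set: seq V * (seq V * seq V)]) (spin_term th u.1 u.2.1 u.2.2)%:E.
Proof. by apply: esum_esum3 => *; rewrite lee_fin spin_term_ge0. Qed.

Lemma L_SPIN_twice th :
  (L_SPIN q pdata p lam th tht + L_SPIN q pdata p lam th tht =
   \esum_(u in [set: seq V * (seq V * seq V)])
     (spin_sym_term th u.1 u.2.1 u.2.2)%:E)%E.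
Proof.
pose swap (u : seq V * (seq V * seq V)) := (u.1, (u.2.2, u.2.1)).
have swapK : involutive swap by case=> ? [].
rewrite L_SPIN_flat -[in X in (_ + X)%E](esum_involutive _ swapK) -esumD //.
all: by move=> *; rewrite lee_fin spin_term_ge0.
Qed.

Lemma spin_target_gt0 x y : 0 < spin_target pdata p lam tht x y.
Proof. by rewrite mulr_gt0 ?powR_gt0 ?divr_gt0. Qed.

(* This rules out the junk normalizer [fine +oo = 0] (with [x / 0 = 0]). *)
Lemma realizes_spin_target_gt0 th x z : realizes_spin_target th x z -> 0 < z.
Proof.
move=> /(_ [::]) th_x; have := p_gt0 th x [::].
by rewrite th_x pmulr_rgt0 ?spin_target_gt0 // invr_gt0.
Qed.

Lemma realizes_spin_reward_margin th x z : realizes_spin_target th x z ->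
  forall y y', spin_reward th x y - spin_reward th x y' =
    ln (pdata x y * p tht x y' / (pdata x y' * p tht x y)).
Proof.
move=> th_x; have z0 := realizes_spin_target_gt0 th_x.
have reward y : spin_reward th x y = ln (pdata x y / p tht x y) - lam * ln z.
  have r0 : 0 < pdata x y / p tht x y by rewrite divr_gt0.
  have pt0 := p_gt0 tht x y.
  rewrite /spin_reward th_x /spin_target.
  rewrite (_ : _ / z / _ = powR (pdata x y / p tht x y) lam^-1 / z); last first.
    by field; rewrite !gt_eqF.
  rewrite ln_div ?posrE ?powR_gt0 // ln_powR mulrBr mulrA mulfV ?gt_eqF //.
  by rewrite mul1r.
move=> y y'; rewrite !reward opprB addrA subrK -ln_div ?posrE ?divr_gt0 //.
by congr ln; field; rewrite !gt_eqF.
Qed.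

Lemma spin_sym_term_min th th' x z : realizes_spin_target th' x z ->
  forall y y', spin_sym_term th' x y y' <= spin_sym_term th x y y'.
Proof.
move=> th'_x y y'; rewrite !spin_sym_termE (realizes_spin_reward_margin th'_x).
by rewrite ler_wpM2l ?pair_logistic_loss_ge ?mulr_gt0.
Qed.

Lemma spin_sym_term_eq_margin th th' x z : realizes_spin_target th' x z ->
  0 < q x -> forall y y', spin_sym_term th x y y' = spin_sym_term th' x y y' ->
  spin_reward th x y - spin_reward th x y' =
  spin_reward th' x y - spin_reward th' x y'.
Proof.
move=> th'_x qx y y'.
rewrite !spin_sym_termE (realizes_spin_reward_margin th'_x).
move=> /(mulfI (lt0r_neq0 qx)) eq_loss; set t := _ - _ in eq_loss *.
have [//|ne] :=
  eqVneq t (ln (pdata x y * p tht x y' / (pdata x y' * p tht x y))).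
by have := pair_logistic_loss_gt (mulr_gt0 (pdata_gt0 _ _) (p_gt0 _ _ _))
  (mulr_gt0 (pdata_gt0 _ _) (p_gt0 _ _ _)) ne; rewrite eq_loss ltxx.
Qed.

Lemma spin_reward_margin_proportional th th' x :
  (forall y y', spin_reward th x y - spin_reward th x y' =
                spin_reward th' x y - spin_reward th' x y') ->
  exists c, 0 < c /\ forall y, p th x y = c * p th' x y.
Proof.
move=> margin; set C := spin_reward th x [::] - spin_reward th' x [::].
exists (expR (C / lam)); split => [|y]; first exact: expR_gt0.
have C_y : spin_reward th x y - spin_reward th' x y = C.
  by have := margin y [::]; rewrite /C; lra.
have ln_ratio : spin_reward th x y - spin_reward th' x y =
    lam * (ln (p th x y) - ln (p th' x y)).
  by rewrite /spin_reward !ln_div ?posrE //; ring.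
have shift : ln (p th x y) = ln (p th' x y) + C / lam.
  by rewrite -C_y ln_ratio mulrC mulKf ?gt_eqF // addrC subrK.
by rewrite -[p th x y]lnK ?posrE // shift expRD lnK ?posrE // mulrC.
Qed.

Lemma L_SPIN_self_le1 :
  (\esum_(x in [set: seq V]) (q x)%:E = 1)%E ->
  (forall x, \esum_(y in [set: seq V]) (pdata x y)%:E = 1)%E ->
  (forall x, \esum_(y in [set: seq V]) (p tht x y)%:E = 1)%E ->
  (L_SPIN q pdata p lam tht tht <= 1)%E.
Proof.
move=> q1 pdata1 p1.
(* at [th = tht] every reward vanishes, so each loss equals [ln 2 <= 1] *)
have term x y y' : spin_term tht x y y' <= q x * pdata x y * p tht x y'.
  rewrite /spin_term /spin_reward !divff ?gt_eqF // ln1 mulr0 subrr.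
  rewrite /logistic_loss oppr0 expR0.
  apply: ler_piMr; first by rewrite !mulr_ge0 ?q_ge0 ?ltW ?pdata_gt0 ?p_gt0.
  by apply: le_ln1Dx; lra.
have pdata_ge0 x y : (0 <= (pdata x y)%:E)%E by rewrite lee_fin ltW.
have p_ge0 x y : (0 <= (p tht x y)%:E)%E by rewrite lee_fin ltW.
rewrite -q1; apply: le_esum => x _.
rewrite -[leRHS]mule1 -(pdata1 x).
apply: le_trans _ (esumZl_le (q_ge0 x) (fun y _ => pdata_ge0 x y)).
apply: le_esum => y _ /=; rewrite -EFinM -[leRHS]mule1 -(p1 x).
have qpdata_ge0 : 0 <= q x * pdata x y by rewrite mulr_ge0 ?q_ge0 ?ltW.
apply: le_trans _ (esumZl_le qpdata_ge0 (fun y' _ => p_ge0 x y')).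
by apply: le_esum => y' _ /=; rewrite -EFinM lee_fin; exact: term.
Qed.

Lemma spin_sym_term_eq_of_min th th' (z : seq V -> R) :
  (forall x, realizes_spin_target th' x (z x)) ->
  (L_SPIN q pdata p lam th tht <= L_SPIN q pdata p lam th' tht)%E ->
  (L_SPIN q pdata p lam th tht < +oo)%E ->
  forall x y y', spin_sym_term th x y y' = spin_sym_term th' x y y'.
Proof.
move=> th'_z th_le th_fin x y y'; apply: EFin_inj.
pose S th0 (u : seq V * (seq V * seq V)) :=
  (spin_sym_term th0 u.1 u.2.1 u.2.2)%:E.
apply: (@le_esum_eq _ _ [set: _] (S th') (S th) _ _ _ (x, (y, y'))) => //.
- move=> [x0 [y0 y0']] _; rewrite !lee_fin spin_sym_term_ge0 /=.
  exact: spin_sym_term_min (th'_z x0) _ _.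
- by rewrite -!L_SPIN_twice leeD.
- by rewrite -L_SPIN_twice lte_add_pinfty.
Qed.

End SpinObjective.

Theorem theorem5p4 (R : realType) (V : finType) (Theta : Type)
  (q : seq V -> R) (pdata : seq V -> seq V -> R)
  (p : Theta -> seq V -> seq V -> R) (lam : R) (tht tht1 : Theta) :
  (* q is a probability distribution over prompts *)
  (forall x, 0 <= q x) ->
  \esum_(x in [set: seq V]) (q x)%:E = 1%E ->
  (* pdata(.|x) is a conditional distribution, with positive probabilities *)
  (forall x y, 0 < pdata x y) ->
  (forall x, \esum_(y in [set: seq V]) (pdata x y)%:E = 1%E) ->
  (* each p_theta(.|x) is a conditional distribution, positive probabilities *)
  (forall th x y, 0 < p th x y) ->
  (forall th x, \esum_(y in [set: seq V]) (p th x y)%:E = 1%E) ->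
  0 < lam ->
  (* realizability: the normalized target lies in the model family *)
  (exists thstar : Theta, forall x y,
      p thstar x y = spin_target pdata p lam tht x y
                     / fine (spin_norm pdata p lam tht x)) ->
  (* theta_{t+1} is a global minimizer of theta |-> L_SPIN(theta, theta_t) *)
  (forall th : Theta,
      (L_SPIN q pdata p lam tht1 tht <= L_SPIN q pdata p lam th tht)%E) ->
  (* conclusion: proportionality in y, for every prompt in the support of q *)
  forall x, 0 < q x ->
    exists c : R, 0 < c /\
      forall y, p tht1 x y = c * spin_target pdata p lam tht x y.
Proof.
move=> q0 q1 pdata0 pdata1 p0 p1 lam0 [thstar star] tht1_min x qx.
have L1_fin : (L_SPIN q pdata p lam tht1 tht < +oo)%E.
  apply: le_lt_trans (ltry 1); apply: le_trans (tht1_min tht) _.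
  exact: (L_SPIN_self_le1 lam q0 pdata0 p0 q1 pdata1 (p1 tht)).
have sym_eq := spin_sym_term_eq_of_min q0 pdata0 p0 lam0 star
  (tht1_min thstar) L1_fin x.
have margin y y' := spin_sym_term_eq_margin pdata0 p0 lam0 (star x) qx
  (sym_eq y y').
have [c [c0 tht1_x]] := spin_reward_margin_proportional p0 lam0 margin.
have z0 := realizes_spin_target_gt0 pdata0 p0 (star x).
exists (c / fine (spin_norm pdata p lam tht x)).
split; first by rewrite divr_gt0.
by move=> y; rewrite tht1_x star mulrA mulrAC.
Qed.
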